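(* Let $q\ge2$, $n\ge2$, $X=\{0,\ldots,q-1\}$, and let $\mathcal{L}=\{L_1,\ldots,L_k\}$ be a partition of $X^n$ with respect to which the Insect Markov chain on $X^n$ is lumpable. For each $i$ let $L_i'\subseteq X^{n-1}$ be the set of words obtained by deleting the last letter from the elements of $L_i$. If $L_i'\cap L_j'\neq\emptyset$ for some indices $i,j$, then $L_i'=L_j'$.
   Context: For $x,y\in X^n$, $d(x,y)=n-\max\{m\in\{0,\ldots,n\}: x_1\cdots x_m=y_1\cdots y_m\}$. Set $\alpha_j=\frac{q^j-1}{q^{j+1}-1}$ for $1\le j\le n-1$ and $\alpha_n=0$. The Insect Markov chain on $X^n$ has transition probabilities: if $d(x,y)\in\{0,1\}$, $p(x,y)=q^{-1}(1-\alpha_1)+\sum_{i=2}^nq^{-i}\alpha_1\cdots\alpha_{i-1}(1-\alpha_i)$; if $d(x,y)=j>1$, $p(x,y)=\sum_{i=j}^nq^{-i}\alpha_1\cdots\alpha_{i-1}(1-\alpha_i)$. A chain is lumpable with respect to a partition if for all parts $L,L'$ the map $x\mapsto\sum_{y\in L'}p(x,y)$ is constant on $L$. *)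

From HB Require Import structures.
From mathcomp Require Import all_boot all_order all_algebra.
Set Implicit Arguments. Unset Strict Implicit. Unset Printing Implicit Defensive.
Import Order.TTheory GRing.Theory Num.Theory.

Notation word q n := {ffun 'I_n -> 'I_q}.

Definition lcp (q n : nat) (x y : word q n) : nat :=
  \max_(m < n.+1 | [forall i : 'I_n, (i < m) ==> (x i == y i)]) (m : nat).

Definition dist (q n : nat) (x y : word q n) : nat := n - lcp x y.

Local Open Scope ring_scope.

Definition alpha (R : realFieldType) (q n j : nat) : R :=
  if (j < n)%N then ((q%:R ^+ j - 1) / (q%:R ^+ j.+1 - 1)) else 0.

Definition term (R : realFieldType) (q n i : nat) : R :=
  (q%:R ^+ i)^-1 * (\prod_(1 <= l < i) alpha R q n l) * (1 - alpha R q n i).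

Definition insect_p (R : realFieldType) (q n : nat) (x y : word q n) : R :=
  let j := dist x y in
  if (j <= 1)%N then \sum_(1 <= i < n.+1) term R q n i
  else \sum_(j <= i < n.+1) term R q n i.

Definition lumpable (R : realFieldType) (q n : nat) (P : {set {set word q n}}) :=
  forall L L', L \in P -> L' \in P ->
    forall x y, x \in L -> y \in L ->
      \sum_(z in L') insect_p R x z = \sum_(z in L') insect_p R y z.

Definition trunc (q n : nat) (x : word q n) : word q n.-1 :=
  [ffun i : 'I_n.-1 => x (widen_ord (leq_pred n) i)].
Arguments lcp {q n} x y.
Arguments dist {q n} x y.
Arguments insect_p R {q n} x y.
Arguments lumpable R {q n} P.
Arguments trunc {q n} x.

(* The transition matrix of the Insect chain is M = sum_i t_i A_i, where A_i
   relates words with a common prefix of length n - i; M is symmetric, each A_i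
   is positive semidefinite and t_1 > 0.  Lumpability makes the space W of
   functions constant on the blocks M-invariant, hence also its orthogonal
   complement.  For a block L', the function h(x) counting the words of L' with
   the same (n-1)-prefix as x is A_1 1_{L'}, and M A_1 = q M, so M h lies in W.
   Writing h = w + u with w in W and u orthogonal to W gives M u in W and
   orthogonal to W, i.e. M u = 0; semidefiniteness then forces A_1 u = 0, so u
   is orthogonal to h = A_1 1_{L'} as well as to w, whence u = 0 and h is
   constant on the blocks.  As h(x) > 0 exactly when the truncation of x lies
   in the truncation of L', truncations of blocks are equal or disjoint. *)

From HB Require Import structures.
From mathcomp Require Import all_boot all_order all_algebra zify.
Set Implicit Arguments. Unset Strict Implicit. Unset Printing Implicit Defensive.
Import Order.TTheory GRing.Theory Num.Theory.
Local Open Scope ring_scope.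

Section Prefix.
Variables (q n : nat).
Implicit Types (x y z : word q n).

Definition prefix (m : nat) x : {ffun 'I_n -> option 'I_q} :=
  [ffun k : 'I_n => if (k < m)%N then Some (x k) else None].

Lemma prefixP m x z :
  reflect (forall k : 'I_n, (k < m)%N -> x k = z k) (prefix m x == prefix m z).
Proof.
apply: (iffP eqP) => [/ffunP H k km | H].
  by move: (H k); rewrite !ffunE km => -[].
by apply/ffunP => k; rewrite !ffunE; case: ifP => // km; rewrite H.
Qed.

Lemma eq_prefix_le m m' x z : (m' <= m)%N ->
  prefix m x == prefix m z -> prefix m' x == prefix m' z.
Proof.
by move=> le /prefixP H; apply/prefixP => k km; apply: H; apply: leq_trans le.
Qed.

Lemma lcp_le x z : (lcp x z <= n)%N.
Proof. by apply/bigmax_leqP => m _; rewrite -ltnS. Qed.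

Lemma leq_lcp m x z : (m <= n)%N -> (m <= lcp x z)%N = (prefix m x == prefix m z).
Proof.
move=> mn; apply/idP/prefixP => [ml k km | H].
  apply/eqP/negPn/negP => ne.
  have lk : (lcp x z <= k)%N.
    apply/bigmax_leqP => m' /forallP H; rewrite leqNgt; apply/negP => km'.
    by move: (H k); rewrite km' /= (negbTE ne).
  by have := leq_ltn_trans ml (leq_ltn_trans lk km); rewrite ltnn.
have -> : m = Ordinal (mn : (m < n.+1)%N) by [].
apply: (leq_bigmax_cond (F := fun m : 'I_n.+1 => (m : nat))).
by apply/forallP => k; apply/implyP => /H ->.
Qed.

Lemma leq_dist i x z : (i <= n)%N ->
  (dist x z <= i)%N = (prefix (n - i) x == prefix (n - i) z).
Proof.
move=> i_n; rewrite -leq_lcp ?leq_subr // /dist.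
have := lcp_le x z; lia.
Qed.

Lemma eq_trunc x z : (trunc x == trunc z) = (prefix (n - 1) x == prefix (n - 1) z).
Proof.
apply/eqP/prefixP => [/ffunP H k | H].
  rewrite subn1 => hk; move: (H (Ordinal hk)); rewrite !ffunE.
  by have -> : widen_ord (leq_pred n) (Ordinal hk) = k by apply: val_inj.
by apply/ffunP => i; rewrite !ffunE; apply: H; rewrite /= subn1.
Qed.

Lemma card_prefix_class z : (0 < n)%N ->
  #|[set y | prefix (n - 1) y == prefix (n - 1) z]| = q.
Proof.
move=> n_gt0; have last_lt : (n.-1 < n)%N by rewrite prednK.
pose ext (a : 'I_q) := [ffun k : 'I_n => if (k < n - 1)%N then z k else a].
have ext_inj : injective ext.
  move=> a b /ffunP /(_ (Ordinal last_lt)); rewrite !ffunE /=.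
  by rewrite subn1 ltnn.
suff -> : [set y | prefix (n - 1) y == prefix (n - 1) z] = ext @: 'I_q.
  by rewrite card_imset // card_ord.
apply/setP => y; rewrite inE; apply/prefixP/imsetP => [yz | [a _ -> k hk]].
  exists (y (Ordinal last_lt)) => //; apply/ffunP => k; rewrite ffunE.
  case: ifP => hk; first by rewrite yz.
  by congr (y _); apply: val_inj => /=; move: (ltn_ord k) hk; lia.
by rewrite ffunE hk.
Qed.

End Prefix.

Section InsectKernel.
Variables (R : realFieldType) (q n : nat).
Implicit Types (x y z : word q n).

Lemma insect_pE x z : insect_p R x z =
  \sum_(1 <= i < n.+1) term R q n i * (prefix (n - i) x == prefix (n - i) z)%:R.
Proof.
rewrite /insect_p.
have dist_le_n : (dist x z <= n)%N by rewrite /dist leq_subr.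
have E i : (1 <= i < n.+1)%N ->
    (prefix (n - i) x == prefix (n - i) z) = (dist x z <= i)%N.
  by move=> /andP[_ i_le]; rewrite leq_dist.
case: ifP => dist_le1.
  rewrite big_nat_cond [RHS]big_nat_cond; apply: eq_bigr => i /andP[i_range _].
  by rewrite E // (leq_trans dist_le1) ?mulr1 //; case/andP: i_range.
rewrite [RHS](big_cat_nat _ (n := dist x z)) /=; last 2 first.
- by move: dist_le1; case: (dist x z).
- exact: leqW.
rewrite [X in _ = X + _]big_nat_cond [X in _ = X + _]big1 ?add0r; last first.
  move=> i /andP[/andP[i_ge1 i_lt] _].
  have i_le : (i < n.+1)%N by rewrite ltnS ltnW // (leq_trans i_lt).
  by rewrite E ?i_ge1 // leqNgt i_lt mulr0.
rewrite big_nat_cond [RHS]big_nat_cond; apply: eq_bigr => i /andP[/andP[i_ge i_lt] _].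
have i_gt0 : (0 < i)%N by apply: leq_trans i_ge; move: dist_le1; case: (dist x z).
by rewrite E ?i_ge ?mulr1 ?i_gt0.
Qed.

Lemma insect_pC x z : insect_p R x z = insect_p R z x.
Proof. by rewrite !insect_pE; apply: eq_bigr => i _; rewrite eq_sym. Qed.

Lemma insect_p_prefix x z z' : prefix (n - 1) z == prefix (n - 1) z' ->
  insect_p R x z = insect_p R x z'.
Proof.
move=> zz'; rewrite !insect_pE big_nat_cond [RHS]big_nat_cond.
apply: eq_bigr => i /andP[/andP[i_ge1 _] _].
by rewrite (eqP (eq_prefix_le _ zz')) // leq_sub2l.
Qed.

Hypothesis q_ge2 : (2 <= q)%N.

Lemma alpha_ge0 j : 0 <= alpha R q n j.
Proof.
rewrite /alpha; case: ifP => // _.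
rewrite -!natrX; apply: divr_ge0; rewrite subr_ge0 ler1n expn_gt0; lia.
Qed.

Lemma alpha_lt1 j : alpha R q n j < 1.
Proof.
rewrite /alpha; case: ifP => // _.
have qj_gt0 : (0 < q ^ j)%N by rewrite expn_gt0; lia.
have qj_lt : (q ^ j < q ^ j.+1)%N by rewrite ltn_exp2l; lia.
rewrite -!natrX ltr_pdivrMr ?mul1r ?ltrBlDr ?subrK ?ltr_nat //.
by rewrite subr_gt0 ltr1n; lia.
Qed.

Lemma term_ge0 i : 0 <= term R q n i.
Proof.
apply: mulr_ge0; first apply: mulr_ge0.
- by rewrite invr_ge0 exprn_ge0 // ler0n.
- by apply: prodr_ge0 => l _; apply: alpha_ge0.
- by rewrite subr_ge0 ltW // alpha_lt1.
Qed.

Lemma term1_gt0 : 0 < term R q n 1.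
Proof.
rewrite /term big_geq // mulr1; apply: mulr_gt0.
- by rewrite invr_gt0 expr1 ltr0n; lia.
- by rewrite subr_gt0 alpha_lt1.
Qed.

End InsectKernel.

Section FiberForm.
Variables (R : realFieldType) (T U : finType) (g : T -> U).
Implicit Type v : T -> R.

Lemma sumr_sqr_eq0 v : \sum_x v x * v x = 0 -> forall x, v x = 0.
Proof.
move/eqP; rewrite psumr_eq0 => [/allP vv x|x _]; last by rewrite -expr2 sqr_ge0.
by move: (vv x (mem_index_enum x)); rewrite /= mulf_eq0 orbb => /eqP.
Qed.

Lemma fiber_formE v :
  \sum_x \sum_z (g x == g z)%:R * (v x * v z) =
  \sum_c (\sum_(x | g x == c) v x) ^+ 2.
Proof.
transitivity (\sum_x v x * \sum_(z | g z == g x) v z).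
  apply: eq_bigr => x _; rewrite [X in _ = _ * X]big_mkcond mulr_sumr.
  apply: eq_bigr => z _ /=.
  by rewrite eq_sym; case: eqP; rewrite ?mul1r ?mul0r ?mulr0.
rewrite (partition_big g xpredT) //=; apply: eq_bigr => c _.
by rewrite expr2 mulr_suml; apply: eq_big => // x /eqP ->.
Qed.

Lemma fiber_form_ge0 v : 0 <= \sum_x \sum_z (g x == g z)%:R * (v x * v z).
Proof. by rewrite fiber_formE; apply: sumr_ge0 => c _; apply: sqr_ge0. Qed.

Lemma fiber_form_eq0 v :
  \sum_x \sum_z (g x == g z)%:R * (v x * v z) = 0 ->
  forall c, \sum_(x | g x == c) v x = 0.
Proof.
rewrite fiber_formE => form0 c; apply/eqP; rewrite -sqrf_eq0; apply/eqP.
by apply: (psumr_eq0P _ form0) => // c' _; apply: sqr_ge0.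
Qed.

End FiberForm.

Section InsectOperator.
Variables (R : realFieldType) (q n : nat).
Implicit Types (x y z : word q n) (v : word q n -> R).

Definition insect_apply v x : R := \sum_z insect_p R x z * v z.

Lemma dot_insect_apply v : \sum_x v x * insect_apply v x =
  \sum_(1 <= i < n.+1) term R q n i *
     \sum_x \sum_z (prefix (n - i) x == prefix (n - i) z)%:R * (v x * v z).
Proof.
transitivity (\sum_x \sum_z \sum_(1 <= i < n.+1) term R q n i *
   ((prefix (n - i) x == prefix (n - i) z)%:R * (v x * v z))).
  apply: eq_bigr => x _; rewrite mulr_sumr; apply: eq_bigr => z _.
  rewrite insect_pE mulr_suml mulr_sumr; apply: eq_bigr => i _.
  by rewrite mulrCA !mulrA.
under eq_bigr => x _ do rewrite exchange_big.
rewrite exchange_big /=; apply: eq_bigr => i _; rewrite mulr_sumr.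
by apply: eq_bigr => x _; rewrite mulr_sumr.
Qed.

Hypotheses (q_ge2 : (2 <= q)%N) (n_gt0 : (0 < n)%N).

(* Each prefix-class matrix is positive semidefinite and the class of
   length n - 1 carries the positive weight term 1. *)
Lemma insect_apply_eq0 v : (forall x, insect_apply v x = 0) ->
  forall x, \sum_(z | prefix (n - 1) z == prefix (n - 1) x) v z = 0.
Proof.
move=> Pv0 x.
have : \sum_y v y * insect_apply v y = 0 by apply: big1 => y _; rewrite Pv0 mulr0.
rewrite dot_insect_apply big_ltn // => /eqP.
have term_form_ge0 i : 0 <= term R q n i *
    \sum_y \sum_z (prefix (n - i) y == prefix (n - i) z)%:R * (v y * v z).
  by apply: mulr_ge0; [exact: term_ge0 | exact: fiber_form_ge0].
rewrite paddr_eq0 ?sumr_ge0 // => /andP[].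
rewrite mulf_eq0 (gt_eqF (term1_gt0 R n q_ge2)) => /eqP /fiber_form_eq0 -> //.
Qed.

Lemma insect_apply_prefix_sum v x :
  insect_apply (fun y => \sum_(z | prefix (n - 1) y == prefix (n - 1) z) v z) x =
  q%:R * insect_apply v x.
Proof.
rewrite /insect_apply mulr_sumr.
under eq_bigr => y _ do rewrite mulr_sumr big_mkcond.
rewrite exchange_big /=; apply: eq_bigr => z _.
rewrite -big_mkcond /=.
under eq_bigr => y yz do rewrite (insect_p_prefix R x yz).
rewrite sumr_const (_ : #|_| = q) ?mulr_natl //.
by rewrite -[RHS](card_prefix_class z n_gt0); apply: eq_card => y; rewrite inE.
Qed.

End InsectOperator.

Section PrefixCount.
Variables (R : realFieldType) (q n : nat) (L : {set word q n}).
Implicit Types (x y z : word q n) (u : word q n -> R).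

Definition prefix_count x : R :=
  \sum_(z | prefix (n - 1) x == prefix (n - 1) z) (z \in L)%:R.

Lemma prefix_count_gt0 x : (0 < prefix_count x) = (trunc x \in trunc @: L).
Proof.
apply/idP/imsetP => [|[z zL /eqP]]; last first.
  rewrite eq_trunc => xz; rewrite /prefix_count (bigD1 z) //= zL ltr_pwDl //.
  by apply: sumr_ge0 => y _; rewrite ler0n.
case: (pickP [pred z | (z \in L) && (prefix (n - 1) x == prefix (n - 1) z)]).
  by move=> z /andP[zL xz] _; exists z => //; apply/eqP; rewrite eq_trunc.
move=> no_z; rewrite /prefix_count big1 ?ltxx // => z xz.
by move: (no_z z); rewrite /= xz andbT => ->.
Qed.

Lemma dot_prefix_count u :
  (forall x, \sum_(z | prefix (n - 1) z == prefix (n - 1) x) u z = 0) ->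
  \sum_x u x * prefix_count x = 0.
Proof.
move=> class_sum0; under eq_bigr => x _ do rewrite mulr_sumr big_mkcond.
rewrite exchange_big /=; apply: big1 => z _.
rewrite -big_mkcond /= -mulr_suml.
by rewrite class_sum0 mul0r.
Qed.

End PrefixCount.

Section Lumping.
Variables (R : realFieldType) (q n : nat) (P : {set {set word q n}}).
Hypotheses (P_part : partition P [set: word q n]) (P_lump : lumpable R P).
Implicit Types (x y z : word q n) (f u : word q n -> R).

Definition block_constant f :=
  forall L, L \in P -> forall x y, x \in L -> y \in L -> f x = f y.

Definition block_sums0 u := forall L, L \in P -> \sum_(x in L) u x = 0.

Definition block_mean f x : R :=
  (\sum_(y in pblock P x) f y) / #|pblock P x|%:R.

Let P_triv : trivIset P. Proof. by case/and3P: P_part. Qed.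

Lemma sum_blocks (F : word q n -> R) : \sum_x F x = \sum_(L in P) \sum_(x in L) F x.
Proof.
rewrite -(big_trivIset _ P_triv); case/and3P: P_part => /eqP -> _ _.
by apply: eq_bigl => x; rewrite in_setT.
Qed.

Lemma dot_block_constant_sums0 f u :
  block_constant f -> block_sums0 u -> \sum_x f x * u x = 0.
Proof.
move=> f_const u_sums0; rewrite sum_blocks; apply: big1 => L LP.
case: (set_0Vmem L) => [-> | [x0 x0L]]; first by rewrite big_set0.
rewrite (eq_bigr (fun x => f x0 * u x)) => [|x xL]; last by rewrite (f_const L LP x x0).
by rewrite -mulr_sumr u_sums0 ?mulr0.
Qed.

Lemma block_constant_mean f : block_constant (block_mean f).
Proof.
by move=> L LP x y xL yL; rewrite /block_mean !(def_pblock P_triv LP) ?xL ?yL.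
Qed.

Lemma block_sums0_sub_mean f : block_sums0 (fun x => f x - block_mean f x).
Proof.
move=> L LP; rewrite sumrB.
case: (set_0Vmem L) => [-> | [x0 x0L]]; first by rewrite !big_set0 subr0.
rewrite [X in _ - X](eq_bigr (fun=> (\sum_(y in L) f y) / #|L|%:R)); last first.
  by move=> x xL; rewrite /block_mean (def_pblock P_triv LP xL).
rewrite sumr_const -[_ *+ #|L|]mulr_natr divfK ?subrr // pnatr_eq0 -lt0n.
by apply/card_gt0P; exists x0.
Qed.

Lemma block_constant_insect_apply f :
  block_constant f -> block_constant (insect_apply f).
Proof.
move=> f_const L LP x y xL yL; rewrite /insect_apply !sum_blocks.
apply: eq_bigr => L' L'P.
case: (set_0Vmem L') => [-> | [z0 z0L']]; first by rewrite !big_set0.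
have f_z0 w : \sum_(z in L') insect_p R w z * f z = (\sum_(z in L') insect_p R w z) * f z0.
  by rewrite mulr_suml; apply: eq_bigr => z zL'; rewrite (f_const L' L'P z z0).
by rewrite !f_z0 (P_lump LP L'P xL yL).
Qed.

(* insect_p is symmetric, so insect_apply is self-adjoint. *)
Lemma block_sums0_insect_apply u : block_sums0 u -> block_sums0 (insect_apply u).
Proof.
move=> u_sums0 L LP; rewrite /insect_apply exchange_big /=.
rewrite (eq_bigr (fun z => (\sum_(x in L) insect_p R z x) * u z)) => [|z _].
  apply: dot_block_constant_sums0 u_sums0 => L' L'P x y xL' yL'.
  exact: (P_lump L'P LP xL' yL').
by rewrite -mulr_suml; congr (_ * _); apply: eq_bigr => x _; rewrite insect_pC.
Qed.

Lemma block_constant_sums0_eq0 u :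
  block_constant u -> block_sums0 u -> forall x, u x = 0.
Proof. by move=> u_const u_sums0; apply/sumr_sqr_eq0/dot_block_constant_sums0. Qed.

Hypotheses (q_ge2 : (2 <= q)%N) (n_gt0 : (0 < n)%N).

Lemma block_constant_insect_prefix_count L :
  L \in P -> block_constant (insect_apply (prefix_count R L)).
Proof.
move=> LP L1 L1P x y xL1 yL1.
rewrite /prefix_count !insect_apply_prefix_sum //; congr (_ * _).
have := P_lump L1P LP xL1 yL1; rewrite big_mkcond [RHS]big_mkcond /= => lump.
rewrite /insect_apply; under eq_bigr => z _ do rewrite mulr_natr mulrb.
by under [RHS]eq_bigr => z _ do rewrite mulr_natr mulrb.
Qed.

Lemma block_constant_prefix_count L : L \in P -> block_constant (prefix_count R L).
Proof.
move=> LP; set h := prefix_count R L.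
set u := fun x => h x - block_mean h x.
have u_sums0 : block_sums0 u by exact: block_sums0_sub_mean.
have Pu_const : block_constant (insect_apply u).
  move=> L1 L1P x y xL1 yL1; rewrite /insect_apply.
  under eq_bigr => z _ do rewrite mulrBr; under [RHS]eq_bigr => z _ do rewrite mulrBr.
  rewrite !sumrB -!/(insect_apply _ _).
  rewrite (block_constant_insect_prefix_count LP L1P xL1 yL1).
  by rewrite (block_constant_insect_apply (block_constant_mean h) L1P xL1 yL1).
have Pu0 := block_constant_sums0_eq0 Pu_const (block_sums0_insect_apply u_sums0).
have uu0 : \sum_x u x * u x = 0.
  transitivity (\sum_x u x * h x - \sum_x block_mean h x * u x).
    by rewrite -sumrB; apply: eq_bigr => x _; rewrite mulrBr [block_mean h x * _]mulrC.
  rewrite (dot_block_constant_sums0 (block_constant_mean h) u_sums0) subr0.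
  exact/dot_prefix_count/insect_apply_eq0.
move=> L1 L1P x y xL1 yL1; have u0 := sumr_sqr_eq0 uu0.
have hE z : h z = block_mean h z by apply/subr0_eq/u0.
by rewrite hE [RHS]hE (block_constant_mean h L1P xL1 yL1).
Qed.

Lemma trunc_block_subset Li Lj : Li \in P -> Lj \in P ->
  (trunc @: Li) :&: (trunc @: Lj) != set0 -> trunc @: Lj \subset trunc @: Li.
Proof.
move=> LiP LjP /set0Pn[w /setIP[w_Li /imsetP[y yLj w_y]]].
rewrite w_y -(prefix_count_gt0 R) in w_Li; apply/subsetP => _ /imsetP[v vLj ->].
by rewrite -(prefix_count_gt0 R) (block_constant_prefix_count LiP LjP vLj yLj).
Qed.

End Lumping.

Theorem lemma13 (R : realFieldType) (q n : nat) (P : {set {set word q n}}) :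
  (2 <= q)%N -> (2 <= n)%N ->
  partition P [set: word q n] ->
  lumpable R P ->
  forall Li Lj, Li \in P -> Lj \in P ->
    (trunc @: Li) :&: (trunc @: Lj) != set0 ->
    trunc @: Li = trunc @: Lj.
Proof.
move=> q_ge2 n_ge2 P_part P_lump Li Lj LiP LjP meet.
have n_gt0 : (0 < n)%N by apply: ltnW.
apply/eqP; rewrite eqEsubset; apply/andP; split;
  apply: (trunc_block_subset P_part P_lump) => //; by rewrite setIC.
Qed.
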